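(* Let $L\subset\mathbb{R}^3$ be a link (finite disjoint union of closed curves) of positive thickness. Then $L$ is regular. If moreover $L$ is $G$-invariant for a subgroup $G\subset\operatorname{O}(3)$, then $L$ is $G$-regular.
   Context: The thickness $\operatorname{Thi}(L)$ is the reach of $L$: the supremum of $\epsilon$ such that every point within distance $\epsilon$ of $L$ has a unique nearest point on $L$. A variation field $\eta$ is the initial velocity field of a smooth family $\phi^t$ ($t\in(-\epsilon,\epsilon)$) of $C^2$ diffeomorphisms of $\mathbb{R}^3$ with $\phi^0=\mathrm{Id}$; $\delta_\eta\operatorname{Thi}(L):=\frac{d}{dt^+}\operatorname{Thi}(\phi^t(L))|_{t=0}$. $L$ is regular if there is a variation field $\eta$ (a thickening field) with $\delta_\eta\operatorname{Thi}(L)>0$. $L$ is $G$-invariant if $gL=L$ for all $g\in G$; a field $\eta$ is $G$-invariant if $\eta(gx)=g\,\eta(x)$ for all $g\in G$, $x\in\mathbb{R}^3$. A $G$-invariant $L$ is $G$-regular if it has a $G$-invariant thickening field. *)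

From HB Require Import structures.
From mathcomp Require Import all_boot all_order all_algebra.
From mathcomp Require Import all_classical all_reals all_analysis.
Set Implicit Arguments. Unset Strict Implicit. Unset Printing Implicit Defensive.
Import Order.TTheory GRing.Theory Num.Theory numFieldNormedType.Exports.
Local Open Scope classical_set_scope.
Local Open Scope ring_scope.

Section Defs.
Variable R : realType.
Notation V3 := 'rV[R]_3.

(* Euclidean norm on R^3 (the canonical norm on matrices is the max norm,
   which we only use for the topology / differentiability, where all norms
   agree). *)
Definition enorm (x : V3) : R := Num.sqrt (\sum_(i < 3) x ord0 i ^+ 2).

Definition nearest (L : set V3) (x y : V3) : Prop :=
  L y /\ forall z, L z -> enorm (x - y) <= enorm (x - z).

Definition unique_nearest_within (L : set V3) (e : R) : Prop :=
  forall x, (exists y, L y /\ enorm (x - y) < e) ->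
    exists y, nearest L x y /\ forall y', nearest L x y' -> y' = y.

(* thickness = reach, as an extended real *)
Definition Thi (L : set V3) : \bar R :=
  ereal_sup [set e%:E | e in [set e : R | 0 <= e /\ unique_nearest_within L e]].

(* real-valued thickness (finite for links) *)
Definition thi (L : set V3) : R := fine (Thi L).

Definition closed_curve (C : set V3) : Prop :=
  exists g : R -> V3, continuous g /\ (forall s, g (s + 1) = g s) /\
    {in `[0, 1[%classic &, injective g} /\ C = g @` `[0, 1[%classic.

Definition link (L : set V3) : Prop :=
  exists (n : nat) (C : 'I_n -> set V3), (0 < n)%N /\
    (forall i, closed_curve (C i)) /\
    (forall i j, i != j -> C i `&` C j = set0) /\
    L = \bigcup_(i in setT) C i.

Section Ck.
Variables (U W : normedModType R).
Definition C1_on (D : set U) (f : U -> W) : Prop :=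
  forall x, D x -> differentiable f x /\ forall v, {for x, continuous ('D_v f)}.
Definition C2_on (D : set U) (f : U -> W) : Prop :=
  C1_on D f /\ forall v, C1_on D ('D_v f).
End Ck.

Definition C2_diffeo (f : V3 -> V3) : Prop :=
  C2_on setT f /\ exists g : V3 -> V3, cancel f g /\ cancel g f /\ C2_on setT g.

Definition diffeo_family (phi : R -> V3 -> V3) : Prop :=
  exists eps : R, 0 < eps /\
    (forall t, `|t| < eps -> C2_diffeo (phi t)) /\
    phi 0 = id /\
    C2_on [set p : R * V3 | `|p.1| < eps] (fun p : R * V3 => phi p.1 p.2).

Definition initial_velocity (phi : R -> V3 -> V3) (eta : V3 -> V3) : Prop :=
  forall x, derivable (fun t => phi t x) 0 1 /\
            eta x = 'D_1 (fun t => phi t x) 0.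

Definition variation_field (eta : V3 -> V3) : Prop :=
  exists phi, diffeo_family phi /\ initial_velocity phi eta.

Definition thickening_field (L : set V3) (eta : V3 -> V3) : Prop :=
  exists phi, diffeo_family phi /\ initial_velocity phi eta /\
    exists d : R, 0 < d /\
      (fun t => (thi (phi t @` L) - thi L) / t) @ 0^'+ --> d.

Definition regular (L : set V3) : Prop := exists eta, thickening_field L eta.

(* orthogonal group O(3), acting on (row) vectors by x |-> g x *)
Definition orth3 (g : 'M[R]_3) : Prop := g *m g^T = 1%:M.
Definition act (g : 'M[R]_3) (x : V3) : V3 := x *m g^T.

Definition subgroup_O3 (G : set 'M[R]_3) : Prop :=
  G `<=` orth3 /\ G 1%:M /\ (forall g h, G g -> G h -> G (g *m h)) /\
  (forall g, G g -> G g^T).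

Definition G_invariant_set (G : set 'M[R]_3) (L : set V3) : Prop :=
  forall g, G g -> act g @` L = L.

Definition G_invariant_field (G : set 'M[R]_3) (eta : V3 -> V3) : Prop :=
  forall g x, G g -> eta (act g x) = act g (eta x).

Definition G_regular (G : set 'M[R]_3) (L : set V3) : Prop :=
  exists eta, G_invariant_field G eta /\ thickening_field L eta.
End Defs.

(* The field eta(x) = x thickens every link: it generates the dilations
   x |-> (1 + t) x, under which the thickness scales as Thi((1 + t) L) =
   (1 + t) Thi(L), so delta_eta Thi(L) = Thi(L) > 0; and eta commutes with
   every linear map, hence is G-invariant for any G in O(3).
   This needs Thi(L) < +oo.  Otherwise every point of R^3 has a unique nearest
   point on L, and such a compact Chebyshev set is convex: for y on a segment
   of L, minimising psi(x) - <y, x> + eps |x|^2 / 2, with psi the convex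
   function whose gradient is the nearest-point map, produces points of L
   within O(sqrt eps) of y.  A link is not convex, since a plane separating
   two points of one of its curves meets that curve in two disjoint closed
   pieces, one on each arc. *)

From HB Require Import structures.
From mathcomp Require Import all_boot all_order all_algebra.
From mathcomp Require Import all_classical all_reals all_analysis.
From mathcomp Require Import ring lra.
Import Order.TTheory GRing.Theory Num.Theory numFieldNormedType.Exports.
Local Open Scope classical_set_scope.
Local Open Scope ring_scope.
Set Implicit Arguments. Unset Strict Implicit. Unset Printing Implicit Defensive.

Section Euclid.
Variable R : realType.
Local Notation V := 'rV[R]_3.

Definition enorm2 (v : V) : R := \sum_(i < 3) v ord0 i ^+ 2.
Definition dot (u v : V) : R := \sum_(i < 3) u ord0 i * v ord0 i.

Lemma sum3 (F : 'I_3 -> R) : \sum_(i < 3) F i = F 0 + F 1 + F 2.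
Proof.
rewrite !big_ord_recl big_ord0 addr0 addrA.
by congr (F _ + F _ + F _); apply: val_inj.
Qed.

Lemma enorm2E (v : V) : enorm2 v = v ord0 0 ^+ 2 + v ord0 1 ^+ 2 + v ord0 2 ^+ 2.
Proof. exact: sum3. Qed.

Lemma dotE (u v : V) :
  dot u v = u ord0 0 * v ord0 0 + u ord0 1 * v ord0 1 + u ord0 2 * v ord0 2.
Proof. exact: sum3. Qed.

Lemma enormE (v : V) : enorm v = Num.sqrt (enorm2 v).
Proof. by []. Qed.

Lemma enorm2_ge0 (v : V) : 0 <= enorm2 v.
Proof. rewrite enorm2E; nra. Qed.

Lemma enorm_ge0 (v : V) : 0 <= enorm v.
Proof. exact: sqrtr_ge0. Qed.

Lemma enorm_sq (v : V) : enorm v ^+ 2 = enorm2 v.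
Proof. by rewrite enormE sqr_sqrtr // enorm2_ge0. Qed.

Lemma ler_enorm (u v : V) : (enorm u <= enorm v) = (enorm2 u <= enorm2 v).
Proof. by rewrite !enormE ler_sqrt ?enorm2_ge0. Qed.

Lemma coord_sq_le_enorm2 (v : V) i : v ord0 i ^+ 2 <= enorm2 v.
Proof.
rewrite enorm2E; have : i = 0 \/ i = 1 \/ i = 2.
  by case: i => [[|[|[|k]]] Hk]; [left|right; left|right; right|]; rewrite //; apply: val_inj.
by case=> [->|[->|->]]; nra.
Qed.

Lemma enorm2_eq0 (v : V) : enorm2 v = 0 -> v = 0.
Proof.
move=> v0; apply/rowP => i; rewrite mxE.
have : v ord0 i ^+ 2 = 0.
  by apply/eqP; rewrite eq_le sqr_ge0 andbT -v0 coord_sq_le_enorm2.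
by move/eqP; rewrite sqrf_eq0 => /eqP.
Qed.

Lemma enorm2_gt0 (v : V) : v != 0 -> 0 < enorm2 v.
Proof. by move=> v0; rewrite lt_def enorm2_ge0 andbT; apply: contra_neq v0 => /enorm2_eq0. Qed.

Lemma enorm_coord (v : V) i : `|v ord0 i| <= enorm v.
Proof. by rewrite enormE -sqrtr_sqr ler_sqrt ?enorm2_ge0 ?coord_sq_le_enorm2. Qed.

Lemma mx_norm_coord (v : V) i : `|v ord0 i| <= `|v|.
Proof.
rewrite [X in _ <= X]/Num.norm /= mx_normrE.
exact: (le_bigmax _ (fun ij : 'I_1 * 'I_3 => `|v ij.1 ij.2|) (ord0, i)).
Qed.

Lemma mx_norm_le_enorm (v : V) : `|v| <= enorm v.
Proof.
rewrite [X in X <= _]/Num.norm /= mx_normrE.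
apply: bigmax_le => [|[i j] _ /=]; first exact: enorm_ge0.
by rewrite (ord1 i); exact: enorm_coord.
Qed.

Lemma enorm_le_mx_norm (v : V) : enorm v <= 3 * `|v|.
Proof.
rewrite enormE -[X in _ <= X]ger0_norm ?mulr_ge0 // -sqrtr_sqr ler_sqrt ?sqr_ge0 //.
have coord_sq i : v ord0 i ^+ 2 <= `|v| ^+ 2.
  by rewrite -real_normK ?num_real // lerXn2r ?nnegrE ?mx_norm_coord.
have := coord_sq 0; have := coord_sq 1; have := coord_sq 2.
rewrite enorm2E; nra.
Qed.

Lemma ler_dot_enorm (u v : V) : dot u v <= enorm u * enorm v.
Proof.
have lagrange : enorm2 u * enorm2 v - dot u v ^+ 2 =
    (u ord0 0 * v ord0 1 - u ord0 1 * v ord0 0) ^+ 2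
  + (u ord0 0 * v ord0 2 - u ord0 2 * v ord0 0) ^+ 2
  + (u ord0 1 * v ord0 2 - u ord0 2 * v ord0 1) ^+ 2.
  by rewrite !enorm2E dotE; ring.
have cs : dot u v ^+ 2 <= (enorm u * enorm v) ^+ 2.
  by rewrite exprMn !enorm_sq -subr_ge0 lagrange ?addr_ge0 ?sqr_ge0.
apply: (le_trans (ler_norm _)).
rewrite -sqrtr_sqr -(ger0_norm (mulr_ge0 (enorm_ge0 u) (enorm_ge0 v))).
by rewrite -sqrtr_sqr ler_sqrt ?sqr_ge0.
Qed.

Lemma enormN (v : V) : enorm (- v) = enorm v.
Proof. by rewrite !enormE !enorm2E !mxE; congr Num.sqrt; ring. Qed.

Lemma enormBC (u v : V) : enorm (u - v) = enorm (v - u).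
Proof. by rewrite -enormN opprB. Qed.

Lemma enormZ a (v : V) : enorm (a *: v) = `|a| * enorm v.
Proof.
rewrite !enormE -sqrtr_sqr -sqrtrM ?sqr_ge0 //.
by rewrite !enorm2E !mxE; congr Num.sqrt; ring.
Qed.

Lemma enorm0 : enorm (0 : V) = 0.
Proof. by rewrite -(scale0r 0) enormZ normr0 mul0r. Qed.

Lemma ler_norm_dot (u v : V) : `|dot u v| <= enorm u * enorm v.
Proof.
rewrite ler_norml ler_dot_enorm andbT lerNl -(enormN u).
by rewrite (_ : - dot u v = dot (- u) v) ?ler_dot_enorm // !dotE !mxE; ring.
Qed.

Lemma ler_enormD (u v : V) : enorm (u + v) <= enorm u + enorm v.
Proof.
rewrite enormE -[X in _ <= X]ger0_norm ?addr_ge0 ?enorm_ge0 // -sqrtr_sqr ler_sqrt ?sqr_ge0 //.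
have -> : enorm2 (u + v) = enorm2 u + 2 * dot u v + enorm2 v.
  by rewrite !enorm2E dotE !mxE; ring.
rewrite -(enorm_sq u) -(enorm_sq v); have := ler_dot_enorm u v; nra.
Qed.

Lemma ler_enorm_distD (x y z : V) : enorm (x - z) <= enorm (x - y) + enorm (y - z).
Proof. by have := ler_enormD (x - y) (y - z); rewrite addrA subrK. Qed.

Lemma ler_enorm_dist_dist (u v : V) : `|enorm u - enorm v| <= enorm (u - v).
Proof.
have := ler_enorm_distD u v 0; have := ler_enorm_distD v u 0.
rewrite !subr0 [enorm (v - u)]enormBC ler_norml => vu uv.
by apply/andP; split; lra.
Qed.

End Euclid.

Section EuclidTopology.
Variable R : realType.
Local Notation V := 'rV[R]_3.

Lemma nbhs_enormP (x : V) (P : set V) :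
  nbhs x P <-> exists2 d, 0 < d & forall y, enorm (x - y) < d -> P y.
Proof.
rewrite -filter_from_norm_nbhs; split=> [[d d0 xP]|[d d0 xP]].
  by exists d => // y xy; apply: xP; exact: le_lt_trans (mx_norm_le_enorm _) xy.
exists (d / 3) => [|y /= xy]; first by rewrite /= divr_gt0.
by apply: xP; rewrite (le_lt_trans (enorm_le_mx_norm _)) // -ltr_pdivlMl // mulrC.
Qed.

Lemma lipschitz_continuous (f : V -> R) (k : R) :
  (forall x y, `|f x - f y| <= k * enorm (x - y)) -> continuous f.
Proof.
move=> fk x B; rewrite -filter_from_norm_nbhs => -[e e0 eB]; apply/nbhs_enormP.
exists (e / (`|k| + 1)) => [|y xy]; first by rewrite divr_gt0 // ltr_wpDl.
apply: eB; rewrite /=; apply: le_lt_trans (fk x y) _.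
rewrite ltr_pdivlMr ?ltr_wpDl // in xy.
have := enorm_ge0 (x - y); have := ler_norm k; nra.
Qed.

Lemma continuous_enorm : continuous (@enorm R).
Proof.
by apply: (@lipschitz_continuous _ 1) => x y; rewrite mul1r ler_enorm_dist_dist.
Qed.

Lemma continuous_enorm2 : continuous (@enorm2 R).
Proof.
rewrite (_ : @enorm2 R = fun x => enorm x * enorm x).
  by move=> x; apply: continuousM; exact: continuous_enorm.
by apply: funext => x; rewrite -expr2 enorm_sq.
Qed.

Lemma continuous_dot (u : V) : continuous (dot u).
Proof.
apply: (@lipschitz_continuous _ (enorm u)) => x y.
by rewrite (_ : _ - _ = dot u (x - y)) ?ler_norm_dot // !dotE !mxE; ring.
Qed.

Lemma closed_enorm_approx (A : set V) y : closed A ->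
  (forall e, 0 < e -> exists z, A z /\ enorm (y - z) < e) -> A y.
Proof.
move=> cA Ay; apply: cA => B /nbhs_enormP [d d0 yB].
by have [z [Az yz]] := Ay d d0; exists z; split => //; exact: yB.
Qed.

Lemma continuous_enorm_dist (c : V) : continuous (fun x : V => enorm (c - x)).
Proof.
move=> x; apply: continuous_comp; last exact: continuous_enorm.
by apply: continuousB; [exact: cst_continuous | exact: cvg_id].
Qed.

Lemma closed_enorm_le (c : V) r : closed [set x | enorm (c - x) <= r].
Proof.
exact: (preimage_closed (fun x _ => @continuous_enorm_dist c x) (closed_le (y := r))).
Qed.

Lemma closed_enorm_ge (c : V) r : closed [set x | r <= enorm (c - x)].
Proof.
exact: (preimage_closed (fun x _ => @continuous_enorm_dist c x) (closed_ge (y := r))).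
Qed.

Lemma bounded_enorm (B : set V) r : (forall x, B x -> enorm x <= r) -> bounded_set B.
Proof.
move=> Br; exists r; split; first exact: num_real.
move=> M rM x Bx; apply: le_trans (mx_norm_le_enorm _) _.
exact: le_trans (Br _ Bx) (ltW rM).
Qed.

Lemma continuous_segment (p q : V) : continuous (fun l : R => (1 - l) *: p + l *: q).
Proof.
move=> l; apply: cvgD; apply: cvgZ; try exact: cvg_cst; try exact: cvg_id.
by apply: cvgB; [exact: cvg_cst | exact: cvg_id].
Qed.

End EuclidTopology.

Section Links.
Variable R : realType.
Local Notation V := 'rV[R]_3.

Lemma compact_image_segment (g : R -> V) (a b : R) :
  continuous g -> compact (g @` `[a, b]).
Proof.
by move=> cg; apply: continuous_compact; [exact: continuous_subspaceT | exact: segment_compact].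
Qed.

Lemma periodic_image_itv (g : R -> V) : (forall s, g (s + 1) = g s) ->
  g @` `[0, 1[ = g @` `[0, 1].
Proof.
move=> gp; apply/seteqP; split => _ [s + <-]; rewrite /= !in_itv /= => /andP[s0 s1].
  by exists s; rewrite //= in_itv /= s0 ltW.
have [->|s_neq1] := eqVneq s 1.
  by exists 0; rewrite /= ?in_itv /= ?lexx ?ltr01 // -[1]add0r gp.
by exists s; rewrite //= in_itv /= s0 lt_neqAle s_neq1.
Qed.

Lemma closed_curve_compact (C : set V) : closed_curve C -> compact C.
Proof.
by move=> [g [cg [gp [_ ->]]]]; rewrite periodic_image_itv //; exact: compact_image_segment.
Qed.

Lemma closed_curve_nonempty (C : set V) : closed_curve C -> C !=set0.
Proof.
by move=> [g [_ [_ [_ ->]]]]; exists (g 0), 0; rewrite //= in_itv /= lexx ltr01.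
Qed.

Lemma compact_bigcup_ord n (F : 'I_n -> set V) (P : set 'I_n) :
  (forall i, compact (F i)) -> compact (\bigcup_(i in P) F i).
Proof.
by move=> cF; rewrite -bigsetU_fset_set; [exact: bigsetU_compact | exact: finite_finset].
Qed.

Lemma link_split (L : set V) : link L ->
  exists C D, [/\ closed_curve C, compact D, L = C `|` D & C `&` D = set0].
Proof.
move=> [n [C [n0 [cC [dC ->]]]]]; set i0 := Ordinal n0.
exists (C i0), (\bigcup_(j in [set j | j != i0]) C j); split => //.
- by apply: compact_bigcup_ord => j; exact: closed_curve_compact.
- apply/seteqP; split=> [x [j _ Cx]|x [Cx|[j _ Cx]]]; [|by exists i0|by exists j].
  by have [<-|ji] := eqVneq j i0; [left|right; exists j].
- apply/seteqP; split=> // x [Cx [j /= ji Cjx]].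
  by have := dC j i0 ji; rewrite -subset0 => /(_ x (conj Cjx Cx)).
Qed.

Lemma link_compact (L : set V) : link L -> compact L.
Proof.
by case/link_split => C [D [cC cD -> _]]; apply: compactU => //; exact: closed_curve_compact.
Qed.

Lemma link_nonempty (L : set V) : link L -> L !=set0.
Proof.
case/link_split => C [D [cC _ -> _]].
by have [x Cx] := closed_curve_nonempty cC; exists x; left.
Qed.

End Links.

Definition chebyshev_set (R : realType) (L : set 'rV[R]_3) : Prop :=
  forall x, exists! y, nearest L x y.

Section Chebyshev.
Variable R : realType.
Local Notation V := 'rV[R]_3.
Variable L : set V.
Hypotheses (cL : compact L) (chebL : chebyshev_set L).

Definition proj (x : V) : V := projT1 (cid (chebL x)).

Lemma proj_nearest x : nearest L x (proj x).
Proof. exact: (projT2 (cid (chebL x))).1. Qed.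

Lemma proj_uniq x y : nearest L x y -> y = proj x.
Proof. by move=> xy; apply/esym/(projT2 (cid (chebL x))).2. Qed.

Lemma proj_in x : L (proj x).
Proof. exact: (proj_nearest x).1. Qed.

Lemma proj_le x z : L z -> enorm (x - proj x) <= enorm (x - z).
Proof. exact: (proj_nearest x).2. Qed.

(* By compactness of L and uniqueness of the nearest point. *)
Lemma proj_gap x e : 0 < e -> exists2 m, enorm (x - proj x) < m &
  forall z, L z -> e <= enorm (proj x - z) -> m <= enorm (x - z).
Proof.
move=> e0; set K := L `&` [set z | e <= enorm (proj x - z)].
have [[c Kc]|K0] := pselect (K !=set0); last first.
  exists (enorm (x - proj x) + 1) => [|z Lz ez]; first by rewrite ltrDl.
  by exfalso; apply: K0; exists z.
have cK : compact K by apply: compact_closedI => //; exact: closed_enorm_ge.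
have [{Kc}c /set_mem [Lc ce] cmin] :=
  EVT_min_rV (ex_intro _ c Kc) cK (continuous_subspaceT (@continuous_enorm_dist _ x)).
exists (enorm (x - c)) => [|z Lz ez]; last exact: cmin (mem_set (conj Lz ez)).
rewrite lt_neqAle proj_le // andbT; apply/eqP => xc.
have nc : nearest L x c by split => // z Lz; rewrite -xc; exact: proj_le.
by move: ce; rewrite /= -(proj_uniq nc) subrr enorm0; lra.
Qed.

Lemma proj_continuous x e : 0 < e ->
  exists2 d, 0 < d & forall x', enorm (x - x') < d -> enorm (proj x - proj x') < e.
Proof.
move=> e0; have [m rm gap] := proj_gap x e0.
exists ((m - enorm (x - proj x)) / 2) => [|x' xx']; first by rewrite divr_gt0 // subr_gt0.
rewrite ltNge; apply/negP => /(gap _ (proj_in x')) far.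
have := ler_enorm_distD x x' (proj x'); have := proj_le x' (proj_in x).
have := ler_enorm_distD x' x (proj x); rewrite (enormBC x' x); lra.
Qed.

Lemma compact_enorm_bounded : exists M, forall z, L z -> enorm z <= M.
Proof.
have [M [_ LM]] := compact_bounded cL.
exists (3 * (`|M| + 1)) => z Lz; apply: le_trans (enorm_le_mx_norm _) _.
by rewrite ler_pM2l // LM // (le_lt_trans (ler_norm M)) // ltrDl.
Qed.

(* psi x = (|x|^2 - d(x, L)^2) / 2 is the maximum over z in L of
   <x, z> - |z|^2 / 2, attained at proj x: a convex function with
   gradient proj. *)
Definition psi (x : V) : R := dot x (proj x) - enorm2 (proj x) / 2.

Lemma psi_ge x z : L z -> dot x z - enorm2 z / 2 <= psi x.
Proof.
move=> /(proj_le x); rewrite ler_enorm /psi !enorm2E !dotE !mxE; lra.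
Qed.

Lemma continuous_psi : continuous psi.
Proof.
have [M LM] := compact_enorm_bounded.
apply: (@lipschitz_continuous _ _ M) => x x'.
have lip y y' : psi y - psi y' <= M * enorm (y - y').
  have := psi_ge y' (proj_in y); have := ler_dot_enorm (y - y') (proj y).
  have := LM _ (proj_in y); have := enorm_ge0 (y - y').
  by rewrite /psi !dotE !mxE; nra.
by rewrite ler_norml lip andbT lerNl opprB enormBC lip.
Qed.

Definition penalty (y : V) (eps : R) (x : V) : R :=
  psi x - dot y x + eps / 2 * enorm2 x.

Lemma continuous_penalty y eps : continuous (penalty y eps).
Proof.
move=> x; apply: (@continuousD _ _ _ (fun x => psi x - dot y x) (fun x => eps / 2 * enorm2 x)).
  apply: (@continuousB _ _ _ psi (dot y)); first exact: continuous_psi.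
  exact: continuous_dot.
apply: (@continuousM _ _ (fun=> eps / 2) (@enorm2 R)); first exact: cst_continuous.
exact: continuous_enorm2.
Qed.

Lemma psi_ge_segment a b lam : L a -> L b -> 0 <= lam <= 1 -> forall x,
  dot ((1 - lam) *: a + lam *: b) x - ((1 - lam) * enorm2 a + lam * enorm2 b) / 2
  <= psi x.
Proof.
move=> La Lb /andP[lam0 lam1] x; have := psi_ge x La; have := psi_ge x Lb.
rewrite (_ : dot _ x = (1 - lam) * dot x a + lam * dot x b); last first.
  by rewrite !dotE !mxE; ring.
by nra.
Qed.

Definition penalty_grad (y : V) (eps : R) (x : V) : V := proj x - y + eps *: x.

Lemma penalty_step y eps x t : 0 <= t ->
  let v := penalty_grad y eps x in
  penalty y eps (x - t *: v) - penalty y eps x <=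
  t * enorm v * enorm (proj (x - t *: v) - proj x) - t * enorm2 v
  + eps / 2 * t ^+ 2 * enorm2 v.
Proof.
move=> t0 /=; set v := penalty_grad y eps x; set x1 := x - t *: v; set z := proj x1.
have quad : - dot y x1 + eps / 2 * enorm2 x1 - (- dot y x + eps / 2 * enorm2 x)
    = t * dot v z - t * dot v (z - proj x) - t * enorm2 v + eps / 2 * t ^+ 2 * enorm2 v.
  by rewrite /x1 /v /penalty_grad !dotE !enorm2E !mxE; field.
have psi_x1 : psi x1 - psi x <= - (t * dot v z).
  have -> : psi x1 = dot x1 z - enorm2 z / 2 by [].
  have : dot x1 z = dot x z - t * dot v z by rewrite /x1 !dotE !mxE; ring.
  by have := psi_ge x (proj_in x1); rewrite -/z; lra.
have defect : - (t * dot v (z - proj x)) <= t * (enorm v * enorm (z - proj x)).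
  rewrite -mulrN ler_wpM2l // lerNl.
  by have := ler_norm_dot v (z - proj x); rewrite ler_norml => /andP[].
by rewrite /penalty -mulrA; lra.
Qed.

Lemma penalty_min_grad y eps xs : 0 < eps ->
  (forall x, penalty y eps xs <= penalty y eps x) -> penalty_grad y eps xs = 0.
Proof.
move=> eps0 xs_min; set v := penalty_grad y eps xs.
apply: enorm2_eq0; apply/eqP; rewrite eq_le enorm2_ge0 andbT leNgt; apply/negP => v_gt0.
set nv := enorm v; have nv0 : 0 < nv by rewrite /nv enormE sqrtr_gt0.
have [d d0 proj_d] := proj_continuous xs (divr_gt0 nv0 (ltr0n _ 2)).
(* A step this short moves proj by less than |v| / 2 and has eps t <= 1/2,
   so by penalty_step it lowers the penalty by at least t |v|^2 / 4. *)
set t := Num.min (d / (2 * nv)) (1 / (2 * eps)).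
have t0 : 0 < t by rewrite lt_min !divr_gt0 ?mulr_gt0.
have td : t * nv < d.
  have : t <= d / (2 * nv) by rewrite ge_min lexx.
  rewrite ler_pdivlMr ?mulr_gt0 //; have := mulr_gt0 t0 nv0; lra.
have te : eps * t <= 1 / 2.
  have : t <= 1 / (2 * eps) by rewrite ge_min lexx orbT.
  by rewrite ler_pdivlMr ?mulr_gt0 //; lra.
have near : enorm (proj (xs - t *: v) - proj xs) < nv / 2.
  rewrite enormBC; apply: proj_d.
  by rewrite opprB addrC subrK enormZ gtr0_norm.
have /= := penalty_step y eps xs (ltW t0); rewrite -/v -enorm_sq -/nv.
have := xs_min (xs - t *: v).
have := ler_wpM2l (mulr_ge0 (ltW t0) (ltW nv0)) (ltW near).
have := ler_wpM2r (mulr_ge0 (ltW t0) (sqr_ge0 nv)) te.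
have := mulr_gt0 t0 (exprn_gt0 2 nv0).
lra.
Qed.

Lemma penalty_min_exists y eps K : 0 < eps -> 0 <= K ->
  (forall x, dot y x - K / 2 <= psi x) ->
  exists xs, (forall x, penalty y eps xs <= penalty y eps x) /\ eps * enorm2 xs <= K.
Proof.
move=> eps0 K0 psi_y.
have low x : - K / 2 + eps / 2 * enorm2 x <= penalty y eps x.
  by have := psi_y x; rewrite /penalty; lra.
have pen0 : penalty y eps 0 <= 0.
  have -> : penalty y eps 0 = - (enorm2 (proj 0) / 2).
    by rewrite /penalty /psi !dotE !enorm2E !mxE; field.
  by rewrite oppr_le0 divr_ge0 ?enorm2_ge0.
set rho := Num.sqrt (K / eps); set B := [set x : V | enorm (0 - x) <= rho].
have B0 : B 0 by rewrite /B /= subr0 enorm0 sqrtr_ge0.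
have cB : compact B.
  apply: bounded_closed_compact; last exact: closed_enorm_le.
  by apply: (@bounded_enorm _ _ rho) => x; rewrite /B /= sub0r enormN.
have [xs _ xs_min] := EVT_min_rV (ex_intro _ 0 B0) cB
  (continuous_subspaceT (@continuous_penalty y eps)).
have xs_glob x : penalty y eps xs <= penalty y eps x.
  have [Bx|nBx] := pselect (B x); first exact: xs_min (mem_set Bx).
  apply: le_trans (xs_min _ (mem_set B0)) _; apply: le_trans pen0 _.
  apply: le_trans (low x).
  have : rho < enorm x by rewrite ltNge; apply: contra_notN nBx; rewrite /B /= sub0r enormN.
  rewrite -(ltr_pXn2r (_ : (0 < 2)%N)) ?nnegrE ?sqrtr_ge0 ?enorm_ge0 //.
  rewrite sqr_sqrtr ?divr_ge0 ?(ltW eps0) // enorm_sq ltr_pdivrMr // => Kx.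
  lra.
exists xs; split => //; have := xs_glob 0; have := low xs; lra.
Qed.

Lemma chebyshev_convex a b lam : L a -> L b -> 0 <= lam <= 1 ->
  L ((1 - lam) *: a + lam *: b).
Proof.
move=> La Lb lam01; set y := _ + _; set K := (1 - lam) * enorm2 a + lam * enorm2 b.
have K0 : 0 <= K.
  by case/andP: lam01 => ? ?; rewrite addr_ge0 ?mulr_ge0 ?enorm2_ge0 ?subr_ge0.
apply: closed_enorm_approx; first by apply: compact_closed => //; exact: norm_hausdorff.
move=> eta eta0; set eps := eta ^+ 2 / (K + 1).
have K1 : 0 < K + 1 by rewrite ltr_wpDl.
have eps0 : 0 < eps by rewrite divr_gt0 ?exprn_gt0.
have [xs [/(penalty_min_grad eps0) grad0 small]] :=
  @penalty_min_exists y eps K eps0 K0 (psi_ge_segment La Lb lam01).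
exists (proj xs); split; first exact: proj_in.
have -> : y - proj xs = eps *: xs.
  by rewrite -[LHS]addr0 -grad0 /penalty_grad; apply/rowP => i; rewrite !mxE; ring.
have epsK : eps * K < eta ^+ 2.
  by rewrite /eps mulrAC ltr_pdivrMr // ltr_pM2l ?exprn_gt0 // ltrDl.
have : (eps * enorm xs) ^+ 2 < eta ^+ 2.
  by rewrite exprMn enorm_sq; have := ler_wpM2l (ltW eps0) small; rewrite expr2 -mulrA; lra.
rewrite enormZ gtr0_norm // ltr_pXn2r // nnegrE ?(ltW eta0) //.
by rewrite mulr_ge0 ?enorm_ge0 ?(ltW eps0).
Qed.

End Chebyshev.

Lemma closed_disjoint_separated (T : topologicalType) (A B : set T) :
  closed A -> closed B -> A `&` B = set0 -> separated A B.
Proof.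
by move=> cA cB AB; rewrite /separated -(closure_id A).1 // -(closure_id B).1.
Qed.

Section NotConvex.
Variable R : realType.
Local Notation V := 'rV[R]_3.

Lemma IVT_up_down (f : R -> R) (m c : R) : continuous f -> 0 < m < 1 ->
  f 0 = 0 -> f 1 = 0 -> 0 < c < f m ->
  exists s1 s2, [/\ 0 < s1 < m, m < s2 < 1, f s1 = c & f s2 = c].
Proof.
move=> fc /andP[m0 m1] f0 f1 /andP[c0 cm].
have [s1] : exists2 s1, s1 \in `[0, m] & f s1 = c.
  apply: IVT; [exact: ltW | exact: continuous_subspaceT |].
  by rewrite f0 ge_min le_max (ltW c0) (ltW cm) !orbT.
have [s2] : exists2 s2, s2 \in `[m, 1] & f s2 = c.
  apply: IVT; [exact: ltW | exact: continuous_subspaceT |].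
  by rewrite f1 ge_min le_max (ltW c0) (ltW cm) !orbT.
rewrite !in_itv /= => /andP[ms2 s21] fs2 /andP[s10 s1m] fs1.
have s1_0 : s1 != 0 by apply/eqP => e; move: fs1; rewrite e f0; lra.
have s1_m : m != s1 by apply/eqP => e; move: fs1; rewrite -e; lra.
have s2_m : s2 != m by apply/eqP => e; move: fs2; rewrite e; lra.
have s2_1 : 1 != s2 by apply/eqP => e; move: fs2; rewrite -e f1; lra.
by exists s1, s2; rewrite !lt_def s1_0 s1_m s2_m s2_1 s10 s1m ms2 s21.
Qed.

Lemma curve_cut_separated (g : R -> V) (D H : set V) :
  (forall s, g (s + 1) = g s) -> {in `[0, 1[%classic &, injective g} -> continuous g ->
  closed D -> closed H -> g @` `[0, 1] `&` D = set0 ->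
  ~ H (g 0) -> ~ H (g (1 / 2)) ->
  separated (g @` `[0, 1 / 2] `&` H) ((g @` `[1 / 2, 1] `|` D) `&` H).
Proof.
move=> gp ginj cg cD cH CD0 H0 Hh.
have g1 : g 1 = g 0 by rewrite -[1]add0r gp.
have onH s : 0 <= s <= 1 -> H (g s) -> [/\ 0 < s, s < 1 & s != 1 / 2].
  move=> /andP[s0 s1] Hs; rewrite !lt_def s0 s1 !andbT; split.
  - by apply/eqP => e; apply: H0; rewrite -e.
  - by apply/eqP => e; apply: H0; rewrite -g1 e.
  - by apply/eqP => e; apply: Hh; rewrite -e.
apply: closed_disjoint_separated.
- apply: closedI cH; apply: compact_closed; [exact: norm_hausdorff | exact: compact_image_segment].
- apply: closedI cH; apply: closedU cD; apply: compact_closed; first exact: norm_hausdorff.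
  exact: compact_image_segment.
apply/seteqP; split => // _ [[[s + <-] Hs] [Qs _]]; rewrite /= in_itv /= => /andP[s0 sh].
have [s_gt0 s_lt1 s_neqh] := onH s (ltac:(apply/andP; split; lra)) Hs.
have in01 (r : R) : 0 < r -> r < 1 -> r \in `[0, 1[%classic.
  by move=> r0 r1; apply: mem_set; rewrite /= in_itv /= r1 ltW.
case: Qs => [[s' + gs's]|Ds]; last first.
  have : (g @` `[0, 1] `&` D) (g s) by split => //; exists s; rewrite //= in_itv /= s0; lra.
  by rewrite CD0.
rewrite /= in_itv /= => /andP[hs' s'1]; have Hs' : H (g s') by rewrite gs's.
have [s'_gt0 s'_lt1 _] := onH s' (ltac:(apply/andP; split; lra)) Hs'.
have e := ginj _ _ (in01 _ s_gt0 s_lt1) (in01 _ s'_gt0 s'_lt1) (esym gs's).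
by move: s_neqh; rewrite e eq_le hs' andbT -e sh.
Qed.

Definition mid_plane (a b : V) : set V :=
  [set z | dot (b - a) (z - a) = enorm2 (b - a) / 2].

Lemma closed_mid_plane a b : closed (mid_plane a b).
Proof.
have cf : continuous (fun z : V => dot (b - a) (z - a)).
  move=> z; apply: continuous_comp; last exact: continuous_dot.
  by apply: continuousB; [exact: cvg_id | exact: cst_continuous].
exact: (preimage_closed (fun z _ => cf z) (closed_eq (y := enorm2 (b - a) / 2))).
Qed.

Lemma mid_plane_segment a b p q l : mid_plane a b p -> mid_plane a b q ->
  mid_plane a b ((1 - l) *: p + l *: q).
Proof.
rewrite /mid_plane /= => Hp Hq.
have -> : dot (b - a) ((1 - l) *: p + l *: q - a) =
    (1 - l) * dot (b - a) (p - a) + l * dot (b - a) (q - a).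
  by rewrite !dotE !mxE; ring.
by rewrite Hp Hq; field.
Qed.

Lemma mid_planeNl a b : a != b -> ~ mid_plane a b a.
Proof.
move=> ab; have := enorm2_gt0 (ltac:(by rewrite subr_eq0 eq_sym) : b - a != 0).
by rewrite /mid_plane /= subrr !dotE !mxE; lra.
Qed.

Lemma mid_planeNr a b : a != b -> ~ mid_plane a b b.
Proof.
move=> ab; have := enorm2_gt0 (ltac:(by rewrite subr_eq0 eq_sym) : b - a != 0).
by rewrite /mid_plane /= !dotE !enorm2E; lra.
Qed.

Lemma curve_mid_plane_crossings (g : R -> V) : continuous g -> g 1 = g 0 ->
  g 0 != g (1 / 2) -> exists s1 s2, [/\ 0 < s1 < 1 / 2, 1 / 2 < s2 < 1,
    mid_plane (g 0) (g (1 / 2)) (g s1) & mid_plane (g 0) (g (1 / 2)) (g s2)].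
Proof.
move=> cg g1 g0h; set u := g (1 / 2) - g 0.
have u0 : 0 < enorm2 u by apply: enorm2_gt0; rewrite subr_eq0 eq_sym.
apply: (@IVT_up_down (fun s => dot u (g s - g 0)) (1 / 2) (enorm2 u / 2)).
  - move=> s; apply: continuous_comp; last exact: continuous_dot.
    by apply: continuousB; [exact: cg | exact: cst_continuous].
  - by apply/andP; split; lra.
  - by rewrite subrr !dotE !mxE; ring.
  - by rewrite g1 subrr !dotE !mxE; ring.
  - by rewrite -/u dotE -!expr2 -enorm2E; apply/andP; split; lra.
Qed.

(* A segment of the link joining the two crossings of the mid-plane of
   g 0 and g (1/2) would be disconnected by the two arcs of the curve. *)
Lemma link_not_convex (L : set V) : link L ->
  ~ (forall a b lam, L a -> L b -> 0 <= lam <= 1 -> L ((1 - lam) *: a + lam *: b)).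
Proof.
case/link_split => C [D [[g [cg [gp [ginj Cg]]]] cD -> CD0]] convL.
have CgE : C = g @` `[0, 1] by rewrite Cg periodic_image_itv.
have g1 : g 1 = g 0 by rewrite -[1]add0r gp.
have g0h : g 0 != g (1 / 2).
  have mem (r : R) : 0 <= r < 1 -> r \in `[0, 1[%classic.
    by move=> r01; apply: mem_set; rewrite /= in_itv.
  apply/eqP => /(ginj _ _ (mem 0 (ltac:(by rewrite lexx ltr01)))).
  by move=> /(_ (mem (1 / 2) (ltac:(apply/andP; split; lra)))); lra.
set H := mid_plane (g 0) (g (1 / 2)).
have [s1 [s2 [s1i s2i H1 H2]]] := curve_mid_plane_crossings cg g1 g0h.
have sep := curve_cut_separated gp ginj cg (compact_closed (@norm_hausdorff _ _) cD)
  (@closed_mid_plane _ _) (ltac:(by rewrite -CgE)) (mid_planeNl g0h) (mid_planeNr g0h).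
set S := (fun l => (1 - l) *: g s1 + l *: g s2) @` `[0, 1].
have S_PQ : S `<=` g @` `[0, 1 / 2] `&` H `|` (g @` `[1 / 2, 1] `|` D) `&` H.
  move=> _ [l + <-]; rewrite /= in_itv /= => l01.
  have HS := mid_plane_segment l H1 H2.
  case: (convL (g s1) (g s2) l) => //; [left|left| |].
  - by rewrite CgE; exists s1; rewrite //= in_itv /=; lra.
  - by rewrite CgE; exists s2; rewrite //= in_itv /=; lra.
  - rewrite CgE => -[s]; rewrite /= in_itv /= => s01 gs.
    have [sh|hs] := lerP s (1 / 2); [left|right]; split => //.
      by exists s; rewrite //= in_itv /=; lra.
    by left; exists s; rewrite //= in_itv /=; lra.
  - by move=> Dz; right; split => //; right.
have S_conn : connected S.
  apply: connected_continuous_connected; first exact: segment_connected.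
  exact/continuous_subspaceT/continuous_segment.
have S1 : S (g s1) by exists 0; rewrite /= ?in_itv /= ?lexx ?ler01 // subr0 scale1r scale0r addr0.
have S2 : S (g s2) by exists 1; rewrite /= ?in_itv /= ?lexx ?ler01 // subrr scale0r scale1r add0r.
have PQ0 := separated_disjoint sep; rewrite -subset0 in PQ0.
case: (connected_subset sep S_PQ S_conn) => SPQ.
  apply: (PQ0 (g s2)); split; first exact: SPQ.
  by split => //; left; exists s2; rewrite //= in_itv /=; lra.
apply: (PQ0 (g s1)); split; last exact: SPQ.
by split => //; exists s1; rewrite //= in_itv /=; lra.
Qed.

End NotConvex.

Section Thickness.
Variable R : realType.
Local Notation V := 'rV[R]_3.

Lemma link_not_chebyshev (L : set V) : link L -> ~ chebyshev_set L.
Proof.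
move=> hL chebL; apply: (link_not_convex hL) => a b lam La Lb lam01.
exact: (chebyshev_convex (link_compact hL) chebL La Lb lam01).
Qed.

Lemma link_Thi_lt_pinfty (L : set V) : link L -> (Thi L < +oo)%E.
Proof.
move=> hL; rewrite ltNge leye_eq; apply/negP => /eqP ThiT.
apply: (link_not_chebyshev hL) => x; have [z0 Lz0] := link_nonempty hL.
have : ((enorm (x - z0))%:E < Thi L)%E by rewrite ThiT ltry.
case/ereal_sup_gt => _ [e [_ e_uniq] <-]; rewrite lte_fin => xz0.
have [y [xy y_uniq]] := e_uniq x (ex_intro _ z0 (conj Lz0 xz0)).
by exists y; split => // y' /y_uniq ->.
Qed.

Lemma scale_setK c (A : set V) : c != 0 ->
  [set c^-1 *: z | z in [set c *: z | z in A]] = A.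
Proof.
move=> c0; apply/seteqP; split=> [_ [_ [z Az <-] <-]|z Az].
  by rewrite scalerA mulVf // scale1r.
by exists (c *: z); [exists z | rewrite scalerA mulVf // scale1r].
Qed.

Lemma nearest_scale c (A : set V) x y : 0 < c ->
  nearest A x y -> nearest [set c *: z | z in A] (c *: x) (c *: y).
Proof.
move=> c0 [Ay y_min]; split=> [|_ [z Az <-]]; first by exists y.
by rewrite -!scalerBr !enormZ ler_pM2l ?normr_gt0 ?gt_eqF // y_min.
Qed.

Lemma unique_nearest_within_scale c (A : set V) e : 0 < c ->
  unique_nearest_within A e -> unique_nearest_within [set c *: z | z in A] (c * e).
Proof.
move=> c0 A_e X [_ [[y Ay <-] Xy]].
have c_neq0 : c != 0 by rewrite gt_eqF.
have XE : X = c *: (c^-1 *: X) by rewrite scalerA mulfV // scale1r.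
have : enorm (c^-1 *: X - y) < e.
  by move: Xy; rewrite {1}XE -scalerBr enormZ gtr0_norm // ltr_pM2l.
move=> xy; have [y0 [ny0 y0_uniq]] := A_e _ (ex_intro _ y (conj Ay xy)).
exists (c *: y0); split=> [|Y' nY']; first by rewrite {1}XE; exact: nearest_scale.
have : nearest A (c^-1 *: X) (c^-1 *: Y').
  have ci0 : 0 < c^-1 by rewrite invr_gt0.
  by have := nearest_scale ci0 nY'; rewrite scale_setK.
by move/y0_uniq => <-; rewrite scalerA mulfV // scale1r.
Qed.

Lemma Thi_scale c (A : set V) : 0 < c -> Thi [set c *: z | z in A] = (c%:E * Thi A)%E.
Proof.
move=> c0; rewrite /Thi -ereal_sup_pZl //; congr ereal_sup.
have c_neq0 : c != 0 by rewrite gt_eqF.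
apply/seteqP; split=> [_ [e [e0 ce] <-]|_ [_ [e [e0 Ae] <-] <-]].
  exists (c^-1 * e)%:E; last by rewrite -EFinM mulrA mulfV // mul1r.
  exists (c^-1 * e) => //; split; first by rewrite mulr_ge0 // invr_ge0 ltW.
  have ci0 : 0 < c^-1 by rewrite invr_gt0.
  by have := unique_nearest_within_scale ci0 ce; rewrite scale_setK.
by exists (c * e) => //; split; [rewrite mulr_ge0 // ltW | exact: unique_nearest_within_scale].
Qed.

End Thickness.

Section Affine.
Variables (R : realType) (U W : normedModType R).
Variables (f : U -> W) (c : W).
Hypotheses (f_lin : linear f) (f_cont : continuous f).

Let fL : {linear U -> W} := HB.pack f (GRing.isLinear.Build _ _ _ _ f f_lin).

Lemma differentiable_affine x : differentiable (fun y => f y + c) x.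
Proof.
apply: differentiableD; last exact: differentiable_cst.
exact: (@linear_differentiable _ _ _ fL).
Qed.

Lemma derive_affine x v : 'D_v (fun y => f y + c) x = f v.
Proof.
rewrite deriveE; last exact: differentiable_affine.
rewrite diffD; [|exact: (@linear_differentiable _ _ _ fL)|exact: differentiable_cst].
by rewrite (@diff_lin _ _ _ fL) // diff_cst /= addr0.
Qed.

Lemma C1_on_cst (D : set U) (w : W) : C1_on D (fun _ : U => w).
Proof.
move=> x _; split; first exact: differentiable_cst.
move=> v; rewrite (_ : 'D_v _ = fun _ => 0); first exact: cst_continuous.
by apply: funext => y; exact: derive_cst.
Qed.

Lemma C2_on_affine (D : set U) : C2_on D (fun y => f y + c).
Proof.
have Df v : 'D_v (fun y => f y + c) = fun _ => f v.
  by apply: funext => y; exact: derive_affine.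
split=> [x _|v]; last by rewrite Df; exact: C1_on_cst.
by split=> [|v]; [exact: differentiable_affine | rewrite Df; exact: cst_continuous].
Qed.

End Affine.

Section Scaling.
Variable R : realType.
Local Notation V := 'rV[R]_3.

Definition scalev (k : R) (x : V) : V := k *: x.

Lemma scalev_is_bilinear :
  bilinear_for
    (GRing.Scale.Law.clone _ _ *:%R _) (GRing.Scale.Law.clone _ _ *:%R _) scalev.
Proof.
split=> [u'|u] a x y /=; rewrite /scalev; first by rewrite scalerDl scalerA.
by rewrite scalerDr !scalerA mulrC.
Qed.
HB.instance Definition _ :=
  bilinear_isBilinear.Build R R V V _ _ scalev scalev_is_bilinear.

Definition scaling (t : R) (x : V) : V := (1 + t) *: x.

Lemma continuous_scalev : continuous (fun p : R * V => scalev p.1 p.2).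
Proof. by move=> p; apply: continuousZ; [exact: cvg_fst | exact: cvg_snd]. Qed.

Lemma continuous_snd : continuous (@snd R V).
Proof. by move=> p; exact: cvg_snd. Qed.

Lemma linear_snd : linear (@snd R V).
Proof. by []. Qed.

(* The + 0 lets p.2 count as an affine map below. *)
Let scalingE : (fun p : R * V => scaling p.1 p.2) =
  (fun p => scalev p.1 p.2) + (fun p => p.2 + 0).
Proof.
apply: funext => p; transitivity (scalev p.1 p.2 + (p.2 + 0)) => //.
by rewrite /scaling /scalev addr0 scalerDl scale1r addrC.
Qed.

Lemma differentiable_scaling p : differentiable (fun p : R * V => scaling p.1 p.2) p.
Proof.
rewrite scalingE; apply: differentiableD.
  exact: differentiable_bilin continuous_scalev.
exact: (differentiable_affine 0 linear_snd continuous_snd).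
Qed.

Lemma derive_scaling (p v : R * V) :
  'D_v (fun p : R * V => scaling p.1 p.2) p = (p.1 *: v.2 + v.1 *: p.2) + v.2.
Proof.
have dsc := differentiable_bilin p continuous_scalev.
rewrite scalingE deriveD; last 2 first.
- exact: diff_derivable.
- exact/diff_derivable/(differentiable_affine 0 linear_snd continuous_snd).
rewrite (derive_affine 0 linear_snd continuous_snd) deriveE // diff_bilin //.
exact: continuous_scalev.
Qed.

Lemma C2_on_scaling (D : set (R * V)) : C2_on D (fun p : R * V => scaling p.1 p.2).
Proof.
have Dscaling v : 'D_v (fun p : R * V => scaling p.1 p.2) =
    (fun q : R * V => (q.1 *: v.2 + v.1 *: q.2)) + (fun=> v.2).
  by apply: funext => p; rewrite derive_scaling.
have lin v : linear (fun q : R * V => q.1 *: v.2 + v.1 *: q.2).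
  move=> a q q'; apply/rowP => i; rewrite /= !mxE.
  by rewrite (_ : a *: q.1 = a * q.1) //; ring.
have cont v : continuous (fun q : R * V => q.1 *: v.2 + v.1 *: q.2).
  move=> q; apply: cvgD; apply: cvgZ; try exact: cvg_cst.
    exact: cvg_fst.
  exact: cvg_snd.
split=> [p _|v]; last by rewrite Dscaling; exact: (C2_on_affine _ (lin v) (cont v) D).1.
split=> [|v]; first exact: differentiable_scaling.
rewrite Dscaling; apply: differentiable_continuous.
exact: (differentiable_affine _ (lin v) (cont v)).
Qed.

End Scaling.

Section ScalingThickens.
Variable R : realType.
Local Notation V := 'rV[R]_3.

Lemma C2_on_scale (D : set V) (k : R) : C2_on D (fun x : V => k *: x).
Proof.
have klin : linear (fun x : V => k *: x).
  by move=> a x y; rewrite scalerDr !scalerA mulrC.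
have -> : (fun x : V => k *: x) = fun x => k *: x + 0 by apply: funext => x; rewrite addr0.
exact: C2_on_affine klin (@scaler_continuous _ _ k) D.
Qed.

Lemma C2_diffeo_scaling (t : R) : 1 + t != 0 -> C2_diffeo (scaling t).
Proof.
move=> t1; split; first exact: C2_on_scale.
exists (fun x => (1 + t)^-1 *: x); split; [|split]; last exact: C2_on_scale.
- by move=> x; rewrite /scaling scalerA mulVf // scale1r.
- by move=> x; rewrite /scaling scalerA mulfV // scale1r.
Qed.

Lemma diffeo_family_scaling : diffeo_family (@scaling R).
Proof.
exists (1 / 2); split; first by rewrite divr_gt0.
split=> [t|]; last split; last exact: C2_on_scaling.
  by rewrite ltr_norml => /andP[t_gt _]; apply: C2_diffeo_scaling; apply/eqP; lra.
by apply: funext => x; rewrite /scaling addr0 scale1r.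
Qed.

Lemma initial_velocity_scaling : initial_velocity (@scaling R) id.
Proof.
move=> x; have xlin : linear (fun t : R => t *: x).
  by move=> a s u; rewrite scalerDl scalerA.
have -> : (fun t => scaling t x) = fun t => t *: x + x.
  by apply: funext => t; rewrite /scaling scalerDl scale1r addrC.
split; first exact/diff_derivable/(differentiable_affine x xlin (@scalel_continuous _ _ x)).
by rewrite (derive_affine x xlin (@scalel_continuous _ _ x)) scale1r.
Qed.

Lemma thickening_field_id (L : set V) : link L -> (0 < Thi L)%E -> thickening_field L id.
Proof.
move=> hL Thi_gt0; set T := thi L.
have ThiE : Thi L = T%:E.
  by rewrite /T /thi fineK // ge0_fin_numE ?(ltW Thi_gt0) ?link_Thi_lt_pinfty.
have T0 : 0 < T by rewrite -lte_fin -ThiE.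
exists (@scaling R); split; first exact: diffeo_family_scaling.
split; first exact: initial_velocity_scaling.
exists T; split => //; apply: cvg_near_cst; near=> t.
have t0 : 0 < t by near: t; exact: nbhs_right_gt.
have -> : thi (scaling t @` L) = (1 + t) * T.
  by rewrite /thi Thi_scale ?ThiE // ltr_wpDr // ltW.
by rewrite -/T; field; rewrite gt_eqF.
Unshelve. all: by end_near.
Qed.

End ScalingThickens.

Unset Implicit Arguments.

Theorem lemma3p7 (R : realType) (L : set 'rV[R]_3) :
  link L -> (0 < Thi L)%E ->
  regular L /\
  (forall G : set 'M[R]_3, subgroup_O3 G -> G_invariant_set G L -> G_regular G L).
Proof.
move=> hL Thi_gt0; have idL := thickening_field_id hL Thi_gt0.
by split=> [|G _ _]; exists id.
Qed.
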